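(* Consider optimal control problem OCP-1 (described in the context), let $u_*^1$ be an optimal control with optimal trajectory $(s_*^1,e_*^1,i_*^1,j_*^1)$ and let $\psi_*=(\psi_1^*,\dots,\psi_4^* )$ be the corresponding adjoint function from the Pontryagin maximum principle. Suppose that at some moment $t_0\in[0,T)$ the inequality $A_*(t_0)<0$ holds. Then $\lambda_*^1(t_0)>0.5u_{\max}$.
   Context: Parameters: $\beta_1,\beta_2,\gamma,\rho_1,\rho_2>0$; $\sigma_1,\sigma_2>0$ with $\sigma_1+\sigma_2=1$; $0\le u_{\max}<1$; weights $\alpha_1,\alpha_2\ge0$, $\alpha_3>0$; horizon $T>0$; initial values $s_0,e_0,i_0,j_0>0$ with $s_0+e_0+i_0+j_0\le 1$. The admissible controls are all Lebesgue measurable $u:[0,T]\to[0,u_{\max}]$. The state system is $s'=-s(\beta_1(1-u)^2i+\beta_2(1-u)j)$, $e'=s(\beta_1(1-u)^2i+\beta_2(1-u)j)-\gamma e$, $i'=\sigma_1\gamma e-\rho_1 i$, $j'=\sigma_2\gamma e-\rho_2 j$, with $s(0)=s_0,e(0)=e_0,i(0)=i_0,j(0)=j_0$. OCP-1 is the problem of minimizing $Q(u)=\alpha_1(e(T)+i(T)+j(T))+\alpha_2\int_0^T(e+i+j)\,dt+0.5\alpha_3\int_0^Tu^2\,dt$ over admissible controls. Its Hamiltonian is $H(s,e,i,j,\psi_1,\dots,\psi_4,u)=-s(\beta_1(1-u)^2i+\beta_2(1-u)j)(\psi_1-\psi_2)-\gamma e(\psi_2-\sigma_1\psi_3-\sigma_2\psi_4)-\rho_1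 i\psi_3-\rho_2 j\psi_4-\alpha_2(e+i+j)-0.5\alpha_3u^2$. The adjoint function $\psi_*$ is a nontrivial solution of $\psi_1'=(\beta_1(1-u_*^1)^2i_*^1+\beta_2(1-u_*^1)j_*^1)(\psi_1-\psi_2)$, $\psi_2'=\gamma(\psi_2-\sigma_1\psi_3-\sigma_2\psi_4)+\alpha_2$, $\psi_3'=\beta_1(1-u_*^1)^2s_*^1(\psi_1-\psi_2)+\rho_1\psi_3+\alpha_2$, $\psi_4'=\beta_2(1-u_*^1)s_*^1(\psi_1-\psi_2)+\rho_2\psi_4+\alpha_2$, with $\psi_1(T)=0$, $\psi_2(T)=\psi_3(T)=\psi_4(T)=-\alpha_1$, and $u_*^1(t)$ maximizes $H(s_*^1(t),e_*^1(t),i_*^1(t),j_*^1(t),\psi_*(t),u)$ over $u\in[0,u_{\max}]$ for almost all $t$. Define $A_*(t)=\beta_1s_*^1(t)i_*^1(t)(\psi_1^*(t)-\psi_2^*(t))+0.5\alpha_3$, $B_*(t)=s_*^1(t)(2\beta_1i_*^1(t)+\beta_2j_*^1(t))(\psi_1^*(t)-\psi_2^*(t))$, and, whenever $A_*(t)\neq0$, the indicator function $\lambda_*^1(t)=0.5B_*(t)/A_*(t)$. *)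

From mathcomp Require Import all_boot all_order all_algebra.
From mathcomp Require Import all_classical all_reals all_analysis.
Set Implicit Arguments. Unset Strict Implicit. Unset Printing Implicit Defensive.
Import Order.TTheory GRing.Theory Num.Theory.
Local Open Scope classical_set_scope.
Local Open Scope ring_scope.

Section SEIJ.
Variable R : realType.

Record params := Params {
  beta1 : R; beta2 : R; gamma : R; rho1 : R; rho2 : R;
  sigma1 : R; sigma2 : R; umax : R;
  alpha1 : R; alpha2 : R; alpha3 : R; horizon : R;
  s0 : R; e0 : R; i0 : R; j0 : R }.

Definition params_ok (p : params) : Prop :=
  0 < beta1 p /\ 0 < beta2 p /\ 0 < gamma p /\ 0 < rho1 p /\ 0 < rho2 p /\
  0 < sigma1 p /\ 0 < sigma2 p /\ sigma1 p + sigma2 p = 1 /\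
  0 <= umax p /\ umax p < 1 /\
  0 <= alpha1 p /\ 0 <= alpha2 p /\ 0 < alpha3 p /\ 0 < horizon p /\
  0 < s0 p /\ 0 < e0 p /\ 0 < i0 p /\ 0 < j0 p /\
  s0 p + e0 p + i0 p + j0 p <= 1.

Definition mu := (@lebesgue_measure R).

Definition admissible (p : params) (u : R -> R) : Prop :=
  measurable_fun `[0, horizon p] u /\
  (forall t, 0 <= t <= horizon p -> 0 <= u t <= umax p).

Definition incid (p : params) (u s i j : R) : R :=
  s * (beta1 p * (1 - u) ^+ 2 * i + beta2 p * (1 - u) * j).
Definition f_s p (u s e i j : R) : R := - incid p u s i j.
Definition f_e p (u s e i j : R) : R := incid p u s i j - gamma p * e.
Definition f_i p (u s e i j : R) : R := sigma1 p * gamma p * e - rho1 p * i.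
Definition f_j p (u s e i j : R) : R := sigma2 p * gamma p * e - rho2 p * j.

(* x solves x' = F a.e. on [0,T] with x(0) = x0 (Caratheodory / integral form:
   F integrable on [0,T] and x t = x0 + int_0^t F for all t in [0,T]) *)
Definition solves_fwd (T x0 : R) (x F : R -> R) : Prop :=
  mu.-integrable `[0, T] (EFin \o F) /\
  forall t, 0 <= t <= T -> x t = x0 + Rintegral mu `[0, t] F.

Definition trajectory (p : params) (u s e i j : R -> R) : Prop :=
  let T := horizon p in
  [/\ solves_fwd T (s0 p) s (fun t => f_s p (u t) (s t) (e t) (i t) (j t)),
      solves_fwd T (e0 p) e (fun t => f_e p (u t) (s t) (e t) (i t) (j t)),
      solves_fwd T (i0 p) i (fun t => f_i p (u t) (s t) (e t) (i t) (j t))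
    & solves_fwd T (j0 p) j (fun t => f_j p (u t) (s t) (e t) (i t) (j t))].

Definition cost (p : params) (u s e i j : R -> R) : R :=
  let T := horizon p in
  alpha1 p * (e T + i T + j T)
  + alpha2 p * Rintegral mu `[0, T] (fun t => e t + i t + j t)
  + 2^-1 * alpha3 p * Rintegral mu `[0, T] (fun t => u t ^+ 2).

Definition optimal (p : params) (u s e i j : R -> R) : Prop :=
  admissible p u /\ trajectory p u s e i j /\
  forall v s' e' i' j', admissible p v -> trajectory p v s' e' i' j' ->
    cost p u s e i j <= cost p v s' e' i' j'.

Definition hamiltonian (p : params) (s e i j ps1 ps2 ps3 ps4 u : R) : R :=
  - s * (beta1 p * (1 - u) ^+ 2 * i + beta2 p * (1 - u) * j) * (ps1 - ps2)
  - gamma p * e * (ps2 - sigma1 p * ps3 - sigma2 p * ps4)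
  - rho1 p * i * ps3 - rho2 p * j * ps4 - alpha2 p * (e + i + j)
  - 2^-1 * alpha3 p * u ^+ 2.

(* x solves x' = F a.e. on [0,T] with terminal value x(T) = xT (integral form) *)
Definition solves_bwd (T xT : R) (x F : R -> R) : Prop :=
  mu.-integrable `[0, T] (EFin \o F) /\
  forall t, 0 <= t <= T -> x t = xT - Rintegral mu `[t, T] F.

Definition pmp_adjoint (p : params) (u s e i j ps1 ps2 ps3 ps4 : R -> R) : Prop :=
  let T := horizon p in
  [/\ solves_bwd T 0 ps1 (fun t =>
        (beta1 p * (1 - u t) ^+ 2 * i t + beta2 p * (1 - u t) * j t)
        * (ps1 t - ps2 t)),
      solves_bwd T (- alpha1 p) ps2 (fun t =>
        gamma p * (ps2 t - sigma1 p * ps3 t - sigma2 p * ps4 t) + alpha2 p),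
      solves_bwd T (- alpha1 p) ps3 (fun t =>
        beta1 p * (1 - u t) ^+ 2 * s t * (ps1 t - ps2 t) + rho1 p * ps3 t
        + alpha2 p)
    & solves_bwd T (- alpha1 p) ps4 (fun t =>
        beta2 p * (1 - u t) * s t * (ps1 t - ps2 t) + rho2 p * ps4 t
        + alpha2 p)] /\
      (exists t, 0 <= t <= T /\
         (ps1 t != 0 \/ ps2 t != 0 \/ ps3 t != 0 \/ ps4 t != 0)) /\
      {ae mu, forall t, 0 <= t <= T -> forall v, 0 <= v <= umax p ->
         hamiltonian p (s t) (e t) (i t) (j t) (ps1 t) (ps2 t) (ps3 t) (ps4 t) v
         <= hamiltonian p (s t) (e t) (i t) (j t) (ps1 t) (ps2 t) (ps3 t) (ps4 t)
              (u t)}.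

Definition A_star (p : params) (s i ps1 ps2 : R -> R) (t : R) : R :=
  beta1 p * s t * i t * (ps1 t - ps2 t) + 2^-1 * alpha3 p.
Definition B_star (p : params) (s i j ps1 ps2 : R -> R) (t : R) : R :=
  s t * (2 * beta1 p * i t + beta2 p * j t) * (ps1 t - ps2 t).
(* indicator function, meaningful when A_star t != 0 *)
Definition lambda_star (p : params) (s i j ps1 ps2 : R -> R) (t : R) : R :=
  2^-1 * B_star p s i j ps1 ps2 t / A_star p s i ps1 ps2 t.

End SEIJ.

From mathcomp Require Import all_boot all_order all_algebra.
From mathcomp Require Import all_classical all_reals all_analysis.
From mathcomp Require Import ring lra.
Import Order.TTheory GRing.Theory Num.Theory.
Import numFieldNormedType.Exports.
Local Open Scope classical_set_scope.
Local Open Scope ring_scope.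

(* Along any admissible trajectory all four compartments stay positive: each
   satisfies x' >= - K x for a constant K as long as the others are nonnegative,
   so none can reach 0 first, and a continuous-induction argument on [0, T]
   propagates positivity.  Writing A, B for A_star, B_star at t0: since
   s, i > 0, A < 0 forces psi1 - psi2 < 0, whence B <= 2 (A - alpha3 / 2) < 2 A
   and lambda = B / (2 A) > 1 > umax / 2. *)

Section RealAnalysis.
Context {R : realType}.

Lemma near_at_right_itv (r : R) (P : R -> Prop) : (\forall y \near r^'+, P y) ->
  exists2 d, 0 < d & forall y, r < y < r + d -> P y.
Proof.
rewrite near_withinE => /nbhs_ballP[d /= d0 Pd].
exists d => // y /andP[ry yd]; apply: Pd => //.
by rewrite /ball /= ltr0_norm ?subr_lt0 // opprB ltrBlDl.
Qed.

Lemma real_induction (a b : R) (P : R -> Prop) :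
  (forall r, a <= r <= b -> (forall y, a <= y < r -> P y) -> P r) ->
  (forall r, a <= r < b -> (forall y, a <= y <= r -> P y) ->
     \forall y \near r^'+, P y) ->
  forall r, a <= r <= b -> P r.
Proof.
move=> closed open r /andP[ar rb].
pose S := [set t | a <= t <= b /\ forall y, a <= y <= t -> P y].
have Sa : S a.
  split; first by rewrite lexx (le_trans ar rb).
  move=> y /andP[ay ya]; have -> : y = a by apply/eqP; rewrite eq_le ya ay.
  by apply: closed => [|z]; [rewrite lexx (le_trans ar rb) | lra].
have supS : has_sup S by split; [exists a | exists b => y [/andP[_]]].
set tau := sup S.
have a_tau : a <= tau by exact: sup_upper_bound.
have tau_b : tau <= b by apply: ge_sup; [exists a | move=> y [/andP[_]]].
have P_before : forall y, a <= y < tau -> P y.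
  move=> y /andP[ay ytau].
  have [t [_ Pt] yt] := sup_adherent (ltac:(lra) : 0 < tau - y) supS.
  by apply: Pt; rewrite ay /=; rewrite -/tau in yt; lra.
have P_upto : forall y, a <= y <= tau -> P y.
  move=> y /andP[ay]; rewrite le_eqVlt => /predU1P[->|ytau].
    by apply: closed => //; rewrite a_tau tau_b.
  by apply: P_before; rewrite ay ytau.
suff tau_eq : tau = b by apply: P_upto; rewrite ar tau_eq rb.
apply/eqP; rewrite eq_le tau_b leNgt; apply/negP => tau_lt.
have /near_at_right_itv[d d0 Pd] := open tau (introT andP (conj a_tau tau_lt)) P_upto.
pose t := Num.min (tau + d / 2) b.
have t_gt : tau < t by rewrite lt_min tau_lt andbT; lra.
have : S t.
  split; first by rewrite ge_min lexx orbT andbT; apply: le_trans (ltW t_gt).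
  move=> y /andP[ay yt]; have [ytau|tauy] := leP y tau.
    by apply: P_upto; rewrite ay ytau.
  by apply: Pd; rewrite tauy /=; move: yt; rewrite le_min => /andP[]; lra.
by move/(sup_upper_bound supS); rewrite -/tau; lra.
Qed.

Lemma within_continuous_gt0_right (a b r : R) (x : R -> R) :
  {within `[a, b], continuous x} -> a <= r < b -> 0 < x r ->
  \forall y \near r^'+, 0 < x y.
Proof.
move=> /subspace_continuousP /(_ r); rewrite /= in_itv /= => cx /andP[ar rb] xr.
move: (cx (introT andP (conj ar (ltW rb)))) => /cvgrPdist_lt /(_ _ xr).
rewrite near_withinE => /nbhs_ballP[d /= d0 xnear].
near=> y.
have /xnear : ball r d y.
  rewrite /ball /= ltr0_norm ?subr_lt0; last by near: y; exact: nbhs_right_gt.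
  by rewrite opprB; near: y; exact: nbhs_right_ltDr.
have ry : r < y by near: y; exact: nbhs_right_gt.
have yb : y <= b by near: y; exact: nbhs_right_le.
rewrite /from_subspace in_itv /= yb andbT (le_trans ar (ltW ry)) => /(_ isT).
by rewrite ltr_norml => /andP[]; lra.
Unshelve. all: by end_near.
Qed.

Lemma Rintegral_ge_cst (t r c : R) (F : R -> R) :
  (@mu R).-integrable `]t, r[ (EFin \o F) -> t <= r ->
  (forall y, t < y < r -> c <= F y) ->
  c * (r - t) <= Rintegral (@mu R) `]t, r[ F.
Proof.
move=> iF tr cF.
have icst : (@mu R).-integrable `]t, r[ (EFin \o cst c).
  apply: (@integrableS _ _ _ (@mu R) `[t, r]) => //; first exact: subset_itv_oo_cc.
  apply: continuous_compact_integrable; first exact: segment_compact.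
  by apply: continuous_in_subspaceT => y _; exact: cst_continuous.
have -> : c * (r - t) = Rintegral (@mu R) `]t, r[ (cst c).
  rewrite Rintegral_cst //= /mu lebesgue_measure_itv /= lte_fin.
  by case: (ltgtP t r) tr => // -> _; rewrite subrr mulr0.
by apply: (le_Rintegral _ icst iF) => // y; rewrite /= in_itv /= => /cF.
Qed.

End RealAnalysis.

Section IntegralSolutions.
Context {R : realType} {T x0 : R} {x F : R -> R} (sol : solves_fwd T x0 x F).

Lemma solves_fwd_init : 0 <= T -> x 0 = x0.
Proof.
case: sol => _ hx T0; rewrite hx ?lexx ?T0 //.
by rewrite set_itv1 Rintegral_set1 addr0.
Qed.

Lemma solves_fwd_continuous : 0 <= T -> {within `[0, T], continuous x}.
Proof.
case: sol => iF hx T0.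
have cx : {within `[0, T], continuous
    (fun t => x0 + parameterized_integral (@lebesgue_measure R) 0 t F)}.
  apply: (@within_continuousD _ _ _ _ (fun _ => x0));
    last exact: parameterized_integral_continuous.
  by apply: continuous_in_subspaceT => y _; exact: cst_continuous.
apply: subspace_eq_continuous cx => t; rewrite inE /= in_itv /= => tI.
by rewrite /from_subspace /= hx.
Qed.

Lemma solves_fwd_increment t r : 0 <= t -> t <= r -> r <= T ->
  x r - x t = Rintegral (@mu R) `]t, r[ F.
Proof.
case: sol => iF hx t0 tr rT.
rewrite !hx ?t0 ?(le_trans t0 tr) ?(le_trans tr rT) ?tr ?rT //.
rewrite opprD addrACA subrr add0r.
have iFr : (@mu R).-integrable `[0, r] (EFin \o F).
  by apply: integrableS iF => //; apply: subset_itvl; rewrite bnd_simp.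
rewrite (@Rintegral_itvB R F (BLeft 0) (BRight r) t iFr) ?bnd_simp //.
rewrite -Rintegral_itv_bndo_bndc //.
by apply: integrableS iFr => //; apply: subset_itv; rewrite bnd_simp.
Qed.

(* On a window of length [(2 (K + 1))^-1] before [r], the bound [x' >= - K x]
   lets [x] lose at most half of its maximum over the window. *)
Lemma solves_fwd_gt0 (K r : R) : 0 < x0 -> 0 <= r <= T -> 0 <= K ->
  (forall y, 0 <= y < r -> 0 < x y /\ - (K * x y) <= F y) -> 0 < x r.
Proof.
move=> x00 /andP[r0 rT] K0 hyp.
move: r0; rewrite le_eqVlt => /predU1P[r0|r0].
  by rewrite -r0 solves_fwd_init // r0.
pose del := (2 * (K + 1))^-1.
have del0 : 0 < del by rewrite invr_gt0; lra.
have Kdel : K * del <= 2^-1 by rewrite /del ler_pdivrMr; lra.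
pose t := Num.max 0 (r - del).
have t0 : 0 <= t by rewrite le_max lexx.
have tr : t < r by rewrite gt_max r0 /=; lra.
have rt : r - del <= t by rewrite le_max lexx orbT.
have sub : `[t, r] `<=` `[0, T] by apply: subset_itvScc; rewrite bnd_simp.
have [c] := EVT_max (ltW tr)
  (continuous_subspaceW sub (solves_fwd_continuous (le_trans (ltW r0) rT))).
rewrite in_itv /= => /andP[tc cr] cmax.
have xc : 0 < x c.
  have [xt _] := hyp t (introT andP (conj t0 tr)).
  by apply: lt_le_trans xt (cmax t _); rewrite in_itv /= lexx (ltW tr).
have iF : (@mu R).-integrable `]c, r[ (EFin \o F).
  case: sol => iF _; apply: integrableS iF => //.
  by apply: subset_itvScc; rewrite bnd_simp //; exact: le_trans t0 tc.
have Fc : forall y, c < y < r -> - (K * x c) <= F y.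
  move=> y /andP[cy yr].
  have /hyp[_ Fy] : 0 <= y < r by rewrite yr andbT (le_trans (le_trans t0 tc) (ltW cy)).
  rewrite (le_trans _ Fy) // lerN2 ler_wpM2l // cmax // in_itv /= (ltW yr).
  by rewrite (le_trans tc (ltW cy)).
have := @Rintegral_ge_cst R c r (- (K * x c)) F iF cr Fc.
rewrite -solves_fwd_increment ?(le_trans t0 tc) // => incr.
have : x c * (K * (r - c)) <= x c * 2^-1.
  by rewrite ler_wpM2l ?(ltW xc) // (le_trans _ Kdel) // ler_wpM2l //; lra.
nra.
Qed.

End IntegralSolutions.

Section SEIJ.
Context {R : realType} {p : params R}.

Lemma incid_ge0 u s i j : 0 <= beta1 p -> 0 <= beta2 p -> u <= 1 ->
  0 <= s -> 0 <= i -> 0 <= j -> 0 <= incid p u s i j.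
Proof.
move=> b1 b2 u1 s0 i0 j0; have w0 : 0 <= 1 - u by rewrite subr_ge0.
by rewrite /incid mulr_ge0 // addr_ge0 // !mulr_ge0 // exprn_ge0.
Qed.

Lemma incid_le u s i j Mi Mj : 0 <= beta1 p -> 0 <= beta2 p -> 0 <= u <= 1 ->
  0 <= s -> 0 <= i <= Mi -> 0 <= j <= Mj ->
  incid p u s i j <= s * (beta1 p * Mi + beta2 p * Mj).
Proof.
move=> b1 b2 /andP[u0 u1] s0 /andP[i0 iM] /andP[j0 jM].
have w0 : 0 <= 1 - u by rewrite subr_ge0.
have w1 : 1 - u <= 1 by rewrite lerBlDr lerDl.
rewrite /incid ler_wpM2l // lerD // -!mulrA ler_wpM2l //.
  have : (1 - u) * i <= i by rewrite ler_piMl.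
  by nra.
by apply: le_trans jM; rewrite ler_piMl.
Qed.

Lemma trajectory_gt0 {u s e i j : R -> R} : params_ok p -> admissible p u ->
  trajectory p u s e i j -> forall t, 0 <= t <= horizon p ->
  [/\ 0 < s t, 0 < e t, 0 < i t & 0 < j t].
Proof.
case=> b10 [b20 [g0 [r10 [r20 [sg10 [sg20 [_ [_ [um1 [_ [_ [_ [T0
  [s00 [e00 [i00 [j00 _]]]]]]]]]]]]]]]]].
move=> [_ ubd] [ss se si sj]; set T := horizon p in ubd ss se si sj T0 *.
have T0' := ltW T0.
have [ci _ imax] := EVT_max T0' (solves_fwd_continuous si T0').
have [cj _ jmax] := EVT_max T0' (solves_fwd_continuous sj T0').
have Mi0 : 0 <= i ci.
  by rewrite (le_trans _ (imax 0 _)) ?(solves_fwd_init si) ?ltW // in_itv /= lexx.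
have Mj0 : 0 <= j cj.
  by rewrite (le_trans _ (jmax 0 _)) ?(solves_fwd_init sj) ?ltW // in_itv /= lexx.
apply: real_induction => [r rI pos | r rI pos].
  have bounds y : 0 <= y < r -> [/\ 0 <= s y, 0 <= e y, 0 <= i y <= i ci,
      0 <= j y <= j cj & 0 <= u y <= 1].
    move=> /andP[y0 yr]; have yT : 0 <= y <= T.
      by rewrite y0 (le_trans (ltW yr)) //; case/andP: rI.
    have [/ltW -> /ltW -> /ltW -> /ltW ->] := pos y (introT andP (conj y0 yr)).
    have /andP[u0 uM] := ubd y yT.
    by rewrite imax ?jmax ?in_itv //= u0 (le_trans uM (ltW um1)).
  split.
  - apply: (solves_fwd_gt0 ss (beta1 p * i ci + beta2 p * j cj)) => //.
      by rewrite addr_ge0 // mulr_ge0 // ltW.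
    move=> y /[dup] /pos[sy _ _ _] /bounds[s0 _ iM jM u01]; split => //.
    by rewrite /f_s lerN2 mulrC incid_le // ltW.
  - apply: (solves_fwd_gt0 se (gamma p)) => //; first exact: ltW.
    move=> y /[dup] /pos[_ ey _ _] /bounds[s0 _ /andP[i0 _] /andP[j0 _] /andP[_ u1]].
    by split => //; rewrite /f_e addrC lerDl incid_ge0 // ltW.
  - apply: (solves_fwd_gt0 si (rho1 p)) => //; first exact: ltW.
    move=> y /[dup] /pos[_ _ iy _] /bounds[_ e0 _ _ _].
    by split => //; rewrite /f_i addrC lerDl !mulr_ge0 // ltW.
  - apply: (solves_fwd_gt0 sj (rho2 p)) => //; first exact: ltW.
    move=> y /[dup] /pos[_ _ _ jy] /bounds[_ e0 _ _ _].
    by split => //; rewrite /f_j addrC lerDl !mulr_ge0 // ltW.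
have /andP[r0 _] := rI; have [sr er ir jr] := pos r (introT andP (conj r0 (lexx r))).
near=> y; split; near: y.
- exact: within_continuous_gt0_right (solves_fwd_continuous ss T0') rI sr.
- exact: within_continuous_gt0_right (solves_fwd_continuous se T0') rI er.
- exact: within_continuous_gt0_right (solves_fwd_continuous si T0') rI ir.
- exact: within_continuous_gt0_right (solves_fwd_continuous sj T0') rI jr.
Unshelve. all: by end_near.
Qed.

Lemma lambda_star_gt_half_umax s i j ps1 ps2 t :
  0 < beta1 p -> 0 <= beta2 p -> 0 < alpha3 p -> umax p <= 1 ->
  0 < s t -> 0 < i t -> 0 <= j t -> A_star p s i ps1 ps2 t < 0 ->
  2^-1 * umax p < lambda_star p s i j ps1 ps2 t.
Proof.
rewrite /lambda_star /A_star /B_star => b1 b2 a3 um1 st it jt A0.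
set d := ps1 t - ps2 t in A0 *.
have sd : s t * d < 0.
  have : beta1 p * i t * (s t * d) < 0.
    by rewrite (_ : _ * _ = beta1 p * s t * i t * d); [lra | ring].
  by rewrite pmulr_rlt0 // mulr_gt0.
have Y0 : beta2 p * j t * (s t * d) <= 0 by rewrite mulr_ge0_le0 ?mulr_ge0 // ltW.
have uA : beta1 p * s t * i t * d + 2^-1 * alpha3 p
    <= umax p * (beta1 p * s t * i t * d + 2^-1 * alpha3 p).
  by rewrite -subr_ge0 -[X in _ - X]mul1r -mulrBl mulr_le0 ?subr_le0 // ltW.
rewrite ltr_ndivlMr //.
have -> : s t * (2 * beta1 p * i t + beta2 p * j t) * d
  = 2 * (beta1 p * s t * i t * d) + beta2 p * j t * (s t * d) by ring.
lra.
Qed.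

End SEIJ.

Theorem lemma4 (R : realType) (p : params R) (u s e i j ps1 ps2 ps3 ps4 : R -> R)
  (t0 : R) :
  params_ok p ->
  optimal p u s e i j ->
  pmp_adjoint p u s e i j ps1 ps2 ps3 ps4 ->
  0 <= t0 < horizon p ->
  A_star p s i ps1 ps2 t0 < 0 ->
  lambda_star p s i j ps1 ps2 t0 > 2^-1 * umax p.
Proof.
move=> pok [adm [traj _]] _ /andP[t0_ge0 t0_lt] A0.
have /(trajectory_gt0 pok adm traj)[st _ it jt] : 0 <= t0 <= horizon p.
  by rewrite t0_ge0 ltW.
case: pok => b1 [b2 [_ [_ [_ [_ [_ [_ [_ [um1 [_ [_ [a3 _]]]]]]]]]]]].
by apply: lambda_star_gt_half_umax => //; exact: ltW.
Qed.
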